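(* Let $S$ be a symmetric numerical semigroup minimally generated by $n_1,n_2,n_3,n_4$ which is not a complete intersection. Suppose that $a_1,\dots,a_4,b_1,\dots,b_4$ are integers such that $0<a_i<\alpha_{i+1}$ and $0<b_i<\alpha_{i+2}$ for all $i$, $$\alpha_i=a_i+b_i\quad (i=1,\dots,4),$$ and $$n_1=\alpha_2\alpha_3a_4+a_2b_3b_4,\quad n_2=\alpha_3\alpha_4a_1+a_3b_4b_1,\quad n_3=\alpha_1\alpha_4a_2+a_4b_1b_2,\quad n_4=\alpha_1\alpha_2a_3+a_1b_2b_3.$$ (Such integers always exist for a suitable labeling of the generators, by Bresinsky's theorem.) Then the following are equivalent: 1) every $n_i$ is odd; 2) one of the following holds: (a) all the $\alpha_i$ and all the $a_i$ are odd; (b) there is exactly one index $i_0$ for which $\alpha_{i_0}$ is even, and moreover $a_{i_0}$ and $a_{i_0-1}$ are odd while the other two $a_i$ are even; (c) all the $\alpha_i$ are even and all the $a_i$ are odd.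
   Context: A numerical semigroup is a submonoid $S\subseteq\mathbb{N}$ with $\mathbb{N}\setminus S$ finite. For $S$ minimally generated by $n_1,\dots,n_4$, $\alpha_i$ denotes the least positive integer such that $\alpha_i n_i=\sum_{j\neq i}c_jn_j$ for some non-negative integers $c_j$. Indices are taken modulo 4: for an integer $i$ outside $\{1,\dots,4\}$, $a_i=a_j$, $b_i=b_j$, $\alpha_i=\alpha_j$ where $j\in\{1,\dots,4\}$, $j\equiv i \pmod 4$ (so e.g. $a_0=a_4$). $S$ is symmetric if $F(S)-s\notin S$ for... equivalently, $S$ is symmetric iff for every integer $z$, exactly one of $z$ and $F(S)-z$ lies in $S$, where $F(S)=\max(\mathbb{Z}\setminus S)$ is the Frobenius number. $S$ is a complete intersection if its defining ideal $I_S$ (the kernel of $k[x_1,\dots,x_4]\to k[t]$, $x_i\mapsto t^{n_i}$) is generated by $3$ elements. *)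

From HB Require Import structures.
From mathcomp Require Import all_boot all_order all_algebra.
Set Implicit Arguments. Unset Strict Implicit. Unset Printing Implicit Defensive.
Import Order.TTheory GRing.Theory Num.Theory.

(* Generators are n : 'I_4 -> nat; paper index i (1..4) corresponds to
   ordinal i-1.  Index arithmetic is modulo 4. *)

Definition sh (i : 'I_4) (k : nat) : 'I_4 :=
  Ordinal (ltn_pmod (i + k) (isT : 0 < 4)).

Definition inS (n : 'I_4 -> nat) (z : nat) : Prop :=
  exists c : 'I_4 -> nat, z = \sum_(j < 4) c j * n j.

Definition inSZ (n : 'I_4 -> nat) (z : int) : Prop :=
  exists c : 'I_4 -> nat, z = Posz (\sum_(j < 4) c j * n j).

Definition numerical_semigroup (n : 'I_4 -> nat) : Prop :=
  exists N : nat, forall z : nat, N <= z -> inS n z.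

Definition minimal_gens (n : 'I_4 -> nat) : Prop :=
  forall i : 'I_4, ~ (exists c : 'I_4 -> nat,
      n i = \sum_(j < 4 | j != i) c j * n j).

Definition alpha_rel (n : 'I_4 -> nat) (i : 'I_4) (m : nat) : Prop :=
  exists c : 'I_4 -> nat, m * n i = \sum_(j < 4 | j != i) c j * n j.

Definition is_alpha (n : 'I_4 -> nat) (al : 'I_4 -> nat) : Prop :=
  forall i : 'I_4, 0 < al i /\ alpha_rel n i (al i) /\
    (forall m : nat, 0 < m -> alpha_rel n i m -> al i <= m).

Definition frobenius (n : 'I_4 -> nat) (F : int) : Prop :=
  ~ inSZ n F /\ (forall z : int, (F < z)%R -> inSZ n z).

Definition symmetric_sg (n : 'I_4 -> nat) : Prop :=
  exists F : int, frobenius n F /\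
    forall z : int, (inSZ n z /\ ~ inSZ n (F - z)%R) \/
                    (~ inSZ n z /\ inSZ n (F - z)%R).

(* The polynomial ring k[x_1,...,x_4], realised as iterated univariate
   polynomials (x_1 innermost, x_4 outermost), and the k-algebra map
   x_i |-> t^{n_i} into k[t]. *)
Definition poly4 (k : fieldType) := {poly {poly {poly {poly k}}}}.

Definition ev1 (k : fieldType) (n : 'I_4 -> nat) (p : {poly k}) : {poly k} :=
  p \Po 'X^(n ord0).
Definition ev2 (k : fieldType) (n : 'I_4 -> nat) (p : {poly {poly k}})
  : {poly k} := (map_poly (ev1 n) p).['X^(n (sh ord0 1))].
Definition ev3 (k : fieldType) (n : 'I_4 -> nat) (p : {poly {poly {poly k}}})
  : {poly k} := (map_poly (ev2 n) p).['X^(n (sh ord0 2))].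
Definition ev4 (k : fieldType) (n : 'I_4 -> nat) (p : poly4 k)
  : {poly k} := (map_poly (ev3 n) p).['X^(n (sh ord0 3))].

Definition complete_intersection (k : fieldType) (n : 'I_4 -> nat) : Prop :=
  exists f1 f2 f3 : poly4 k,
    [/\ ev4 n f1 = 0, ev4 n f2 = 0, ev4 n f3 = 0 &
      forall p : poly4 k, ev4 n p = 0 ->
        exists g1 g2 g3 : poly4 k, p = g1 * f1 + g2 * f2 + g3 * f3]%R.

From HB Require Import structures.
From mathcomp Require Import all_boot all_order all_algebra.
From Stdlib Require Import FunctionalExtensionality.

(* Only the parametrisation of the generators matters: reduced mod 2, n_i is
   a Boolean function of the parities of the alpha_j and a_j (those of the
   b_j being their differences), and the claim is a finite check over the
   256 possible parity patterns.  The semigroup-theoretic hypotheses only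
   guarantee, via Bresinsky's theorem, that such a parametrisation exists. *)

(* Indices are written [Ordinal isT] rather than [inord k] so that [vm_compute]
   can evaluate them ([inord] goes through the opaque [idP]). *)
Lemma fun_ord4E {T : Type} (x0 : T) (f : 'I_4 -> T) :
  f = fun i => nth x0 [:: f ord0; f (Ordinal (isT : 1 < 4));
                          f (Ordinal (isT : 2 < 4)); f (Ordinal (isT : 3 < 4))] i.
Proof.
by apply: functional_extensionality => -[[|[|[|[|//]]]] Hi];
  congr f; apply: val_inj.
Qed.

Lemma forall_ord4E (P : pred 'I_4) :
  [forall i, P i] = [&& P ord0, P (Ordinal (isT : 1 < 4)),
                        P (Ordinal (isT : 2 < 4)) & P (Ordinal (isT : 3 < 4))].
Proof.
apply/forallP/and4P => [H | [P0 P1 P2 P3] [[|[|[|[|//]]]] Hi]]; first by split.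
- by rewrite (bool_irrelevance Hi (ltn0Sn 3)).
all: by rewrite (bool_irrelevance Hi isT).
Qed.

Lemma exists_ord4E (P : pred 'I_4) :
  [exists i, P i] = [|| P ord0, P (Ordinal (isT : 1 < 4)),
                        P (Ordinal (isT : 2 < 4)) | P (Ordinal (isT : 3 < 4))].
Proof. by rewrite -[LHS]negbK negb_exists forall_ord4E !negb_and !negbK. Qed.

(* [p] and [q] stand for the parities of the alpha_i and of the a_i. *)
Definition odd_gen_pattern (p q : 'I_4 -> bool) (i : 'I_4) : bool :=
  (p (sh i 1) && p (sh i 2) && q (sh i 3))
  (+) (q (sh i 1) && (p (sh i 2) (+) q (sh i 2)) && (p (sh i 3) (+) q (sh i 3))).

Definition parity_cases (p q : 'I_4 -> bool) : bool :=
  [|| [forall i, p i && q i],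
      [exists i0, [&& ~~ p i0, [forall (j | j != i0), p j],
                      q i0 && q (sh i0 3) & ~~ q (sh i0 1) && ~~ q (sh i0 2)]]
    | [forall i, ~~ p i && q i]].

Lemma parity_casesP (p q : 'I_4 -> bool) :
  reflect
    [\/ (forall i, p i /\ q i),
        (exists i0, [/\ ~~ p i0, (forall j, j != i0 -> p j),
                        q i0 /\ q (sh i0 3) & ~~ q (sh i0 1) /\ ~~ q (sh i0 2)])
      | (forall i, ~~ p i /\ q i)]
    (parity_cases p q).
Proof.
apply: (iffP or3P) => -[H | H | H].
- by apply: Or31 => i; apply/andP; exact: forallP H i.
- apply: Or32; case/existsP: H => i0.
  case/and4P => np /forall_inP pj /andP [? ?] /andP [? ?].
  by exists i0; split.
- by apply: Or33 => i; apply/andP; exact: forallP H i.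
- by apply: Or31; apply/forallP => i; apply/andP.
- apply: Or32; case: H => i0 [np pj [q0 q3] [nq1 nq2]].
  by apply/existsP; exists i0; rewrite np q0 q3 nq1 nq2 /= andbT; exact/forall_inP.
- by apply: Or33; apply/forallP => i; apply/andP.
Qed.

Lemma all_odd_gen_pattern (p q : 'I_4 -> bool) :
  [forall i, odd_gen_pattern p q i] = parity_cases p q.
Proof.
rewrite /parity_cases exists_ord4E !forall_ord4E.
rewrite (fun_ord4E false p) (fun_ord4E false q).
move: (p ord0) (p (Ordinal _)) (p (Ordinal _)) (p (Ordinal _)).
move: (q ord0) (q (Ordinal _)) (q (Ordinal _)) (q (Ordinal _)).
by do 8 case; vm_compute.
Qed.

Lemma odd_gen {n al a b : 'I_4 -> nat} :
  (forall i, al i = a i + b i) ->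
  (forall i, n i = al (sh i 1) * al (sh i 2) * a (sh i 3)
                   + a (sh i 1) * b (sh i 2) * b (sh i 3)) ->
  forall i, odd (n i) = odd_gen_pattern (fun j => odd (al j)) (fun j => odd (a j)) i.
Proof.
move=> al_ab n_def i; have odd_b j : odd (b j) = odd (al j) (+) odd (a j).
  by rewrite al_ab oddD addbC addKb.
by rewrite n_def oddD !oddM !odd_b.
Qed.

Theorem theorem3p2 (k : fieldType) (n al a b : 'I_4 -> nat) :
  numerical_semigroup n ->
  minimal_gens n ->
  symmetric_sg n ->
  ~ complete_intersection k n ->
  is_alpha n al ->
  (forall i : 'I_4, 0 < a i < al (sh i 1)) ->
  (forall i : 'I_4, 0 < b i < al (sh i 2)) ->
  (forall i : 'I_4, al i = a i + b i) ->
  (forall i : 'I_4, n i = al (sh i 1) * al (sh i 2) * a (sh i 3)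
                          + a (sh i 1) * b (sh i 2) * b (sh i 3)) ->
  ((forall i : 'I_4, odd (n i)) <->
   [\/ (forall i : 'I_4, odd (al i) /\ odd (a i)),
       (exists i0 : 'I_4,
          [/\ ~~ odd (al i0),
              (forall j : 'I_4, j != i0 -> odd (al j)),
              odd (a i0) /\ odd (a (sh i0 3)) &
              ~~ odd (a (sh i0 1)) /\ ~~ odd (a (sh i0 2))])
     | (forall i : 'I_4, ~~ odd (al i) /\ odd (a i))]).
Proof.
move=> _ _ _ _ _ _ _ al_ab n_def.
have odd_n := odd_gen al_ab n_def.
apply: iff_trans (iff_sym (rwP (parity_casesP (fun j => odd (al j)) (fun j => odd (a j))))).
rewrite -all_odd_gen_pattern.
by split => [H | /forallP H i]; [apply/forallP => i; rewrite -odd_n | rewrite odd_n].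
Qed.
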